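(* In an unweighted instance, for every facility placement profile $\mathbf{s}$, every rounded client profile $\sigma(\mathbf{s})$ for $\mathbf{s}$ is a client equilibrium.
   Context: Setting: a finite directed graph $H=(V,E)$ whose vertices are clients, all of weight $w(v)=1$ (unweighted); a finite set $F$ of facility agents; a facility placement profile $\mathbf{s}=(s_f)_{f\in F}$ with $s_f\in V$. Let $N(v)=\{v\}\cup\{u:(v,u)\in E\}$, $N_{\mathbf{s}}(v)=\{f\in F:s_f\in N(v)\}$, $A_{\mathbf{s}}(f)=\{v: f\in N_{\mathbf{s}}(v)\}$, $A_{\mathbf{s}}(T)=\bigcup_{f\in T}A_{\mathbf{s}}(f)$, $w(X)=|X|$. A client profile $\sigma(\mathbf{s})$ assigns to each client $v$ numbers $\sigma(\mathbf{s})_{v,f}\in[0,1]$ with $\sigma(\mathbf{s})_{v,f}=0$ for $f\notin N_{\mathbf{s}}(v)$ and $\sum_f\sigma(\mathbf{s})_{v,f}=1$ whenever $N_{\mathbf{s}}(v)\neq\varnothing$. Load $\ell_f=\sum_v\sigma(\mathbf{s})_{v,f}w(v)$; client cost $L_v=w(v)+\sum_{f\in N_{\mathbf{s}}(v)}\sigma(\mathbf{s})_{v,f}\ell_{-v,f}$ with $\ell_{-v,f}=\sum_{u\neq v}\sigma(\mathbf{s})_{u,f}w(u)$. $\sigma(\mathbf{s})$ is a client equilibrium if no client can strictly decrease her cost by unilaterally changing her own distribution. Minimum neighborhood set: for nonempty $F^*\subseteq F$, $V^*\subseteq V$, $\mathrm{MNS}_{\mathbf{s}}(F^*,V^* )$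 is the largest-cardinality subset among the nonempty $T\subseteq F^*$ minimizing $w(A_{\mathbf{s}}(T)\cap V^* )/|T|$. Class set: inductively, while facilities remain, $F_i=\mathrm{MNS}_{\mathbf{s}}(F\setminus\bigcup_{j<i}F_j, V\setminus\bigcup_{j<i}V_j)$, $V_i=A_{\mathbf{s}}(F_i)\setminus\bigcup_{j<i}V_j$, $C_i=(F_i,V_i)$, $\ell(C_i)=w(V_i)/|F_i|$. A client profile $\sigma(\mathbf{s})$ is rounded if for every class $C_i$ and every $f\in F_i$ we have $\ell_f\in\{\lfloor\ell(C_i)\rfloor,\lceil\ell(C_i)\rceil\}$, and for every class $C_i$ and every client $v\in V_i$ there is exactly one $g\in F_i$ with $\sigma(\mathbf{s})_{v,g}=1$. *)

From HB Require Import structures.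
From mathcomp Require Import all_boot all_order all_algebra.
Set Implicit Arguments. Unset Strict Implicit. Unset Printing Implicit Defensive.
Import Order.TTheory GRing.Theory Num.Theory.
Local Open Scope ring_scope.

Section FLG.
Variables (R : realFieldType) (V F : finType) (E : rel V).

Definition nbhd (v : V) : {set V} := [set u | (u == v) || E v u].

Definition Ns (s : F -> V) (v : V) : {set F} := [set f | s f \in nbhd v].

Definition As (s : F -> V) (f : F) : {set V} := [set v | f \in Ns s v].

Definition AsT (s : F -> V) (T : {set F}) : {set V} := \bigcup_(f in T) As s f.

Definition valid_dist (s : F -> V) (v : V) (d : F -> R) : Prop :=
  (forall f, 0 <= d f <= 1) /\
  (forall f, f \notin Ns s v -> d f = 0) /\
  (Ns s v != set0 -> \sum_f d f = 1).

Definition client_profile (s : F -> V) (sigma : V -> F -> R) : Prop :=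
  forall v, valid_dist s v (sigma v).

(* unweighted: w(v) = 1 *)
Definition load (sigma : V -> F -> R) (f : F) : R := \sum_v sigma v f.

Definition load_minus (sigma : V -> F -> R) (v : V) (f : F) : R :=
  \sum_(u | u != v) sigma u f.

Definition cost (s : F -> V) (sigma : V -> F -> R) (v : V) : R :=
  1 + \sum_(f in Ns s v) sigma v f * load_minus sigma v f.

Definition deviate (sigma : V -> F -> R) (v : V) (d : F -> R) : V -> F -> R :=
  fun u => if u == v then d else sigma u.

Definition client_equilibrium (s : F -> V) (sigma : V -> F -> R) : Prop :=
  forall v (d : F -> R), valid_dist s v d ->
    ~ (cost s (deviate sigma v d) v < cost s sigma v).

(* Minimum neighbourhood set: ratio w(A(T) cap Vs) / card T compared by
   cross-multiplication *)
Definition ratio_le (s : F -> V) (Vs : {set V}) (T U : {set F}) : bool :=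
  (#|AsT s T :&: Vs| * #|U| <= #|AsT s U :&: Vs| * #|T|)%N.

Definition is_MNS (s : F -> V) (Fs : {set F}) (Vs : {set V}) (T : {set F}) : bool :=
  [&& T \subset Fs, T != set0 &
   [forall U : {set F}, (U \subset Fs) && (U != set0) ==>
      ratio_le s Vs T U &&
      (ratio_le s Vs U T ==> (#|U| <= #|T|)%N)]].

(* the (unique) MNS; set0 only when Fs is empty *)
Definition MNS (s : F -> V) (Fs : {set F}) (Vs : {set V}) : {set F} :=
  odflt set0 [pick T | is_MNS s Fs Vs T].

(* class set C_1, C_2, ...: each step removes >= 1 facility, so fuel #|F|
   suffices *)
Fixpoint classes_aux (s : F -> V) (n : nat) (Fr : {set F}) (Vr : {set V})
  : seq ({set F} * {set V}) :=
  match n with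
  | 0 => [::]
  | n'.+1 =>
    if Fr == set0 then [::] else
    let Fi := MNS s Fr Vr in
    let Vi := AsT s Fi :&: Vr in
    (Fi, Vi) :: classes_aux s n' (Fr :\: Fi) (Vr :\: Vi)
  end.

Definition class_set (s : F -> V) : seq ({set F} * {set V}) :=
  classes_aux s #|F| [set: F] [set: V].

(* floor and ceiling of l(C_i) = |V_i|/|F_i| *)
Definition class_floor (C : {set F} * {set V}) : nat := (#|C.2| %/ #|C.1|)%N.
Definition class_ceil (C : {set F} * {set V}) : nat :=
  (#|C.2| %/ #|C.1| + ~~ (#|C.1| %| #|C.2|))%N.

Definition rounded (s : F -> V) (sigma : V -> F -> R) : Prop :=
  forall C, C \in class_set s ->
    (forall f, f \in C.1 ->
       load sigma f = (class_floor C)%:R \/ load sigma f = (class_ceil C)%:R) /\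
    (forall v, v \in C.2 -> exists! g, g \in C.1 /\ sigma v g = 1).

End FLG.

(* A client v of class C_i only sees facilities of C_i or of later classes, since a
   facility of an earlier class C_j would have put v into V_j.  The ratios l(C_i) are
   non-decreasing along the class set (minimality of each MNS, applied to the union of
   the MNS with a later set), hence every facility f adjacent to v satisfies
   floor l(C_f) >= ceil l(C_v) - 1.  In a rounded profile v pays exactly the load
   l_g <= ceil l(C_v) of its unique facility g, while any deviation pays
   1 + sum_f d_f l_{-v,f} with l_{-v,g} = l_g - 1 and l_{-v,f} = l_f >= l_g - 1
   otherwise, i.e. at least l_g. *)
From mathcomp Require Import all_boot all_order all_algebra.
From mathcomp Require Import zify lra.
Import Order.TTheory GRing.Theory Num.Theory.
Set Implicit Arguments. Unset Strict Implicit. Unset Printing Implicit Defensive.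

Lemma leq_divn_cross (a b c d : nat) :
  0 < b -> 0 < d -> a * d <= b * c -> a %/ b <= c %/ d.
Proof.
move=> b_gt0 d_gt0 le_ad_bc; rewrite leq_divRL // -(leq_pmul2l b_gt0).
apply: leq_trans le_ad_bc; rewrite mulnA [b * _]mulnC leq_mul2r.
by rewrite leq_divM orbT.
Qed.

(* The minimum is the element having the most elements above it. *)
Lemma finite_total_preorder_min (X : finType) (P : pred X) (le : rel X) x0 :
  P x0 -> (forall x, le x x) -> (forall x y, le x y || le y x) ->
  {in P & &, forall y x z, le x y -> le y z -> le x z} ->
  exists2 x, P x & {in P, forall y, le x y}.
Proof.
move=> Px0 le_refl le_total le_trans_in.
pose above x := #|[pred z | P z && le x z]|.
case: (arg_maxnP above Px0) => x Px x_max; exists x => // y Py.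
apply: contraT => not_le_xy.
have le_yx : le y x by move: (le_total x y); rewrite (negbTE not_le_xy).
suff : above x < above y by rewrite ltnNge (x_max y Py : above y <= above x).
apply: proper_card; apply/properP; split.
  apply/subsetP => z /andP[Pz le_xz].
  by rewrite inE Pz (le_trans_in x y z Px Py Pz le_yx le_xz).
by exists y; rewrite !inE ?le_refl ?(negbTE not_le_xy) ?andbF ?andbT.
Qed.

Section ClassSet.
Variables (V F : finType) (E : rel V) (s : F -> V).
Implicit Types (Fr T U W : {set F}) (Vr Vs : {set V}) (C : {set F} * {set V}).

Lemma ratio_le_trans Vs T U W : U != set0 ->
  ratio_le E s Vs T U -> ratio_le E s Vs U W -> ratio_le E s Vs T W.
Proof. rewrite /ratio_le -card_gt0 => *; nia. Qed.

Lemma MNS_spec Fr Vr : Fr != set0 -> is_MNS E s Fr Vr (MNS E s Fr Vr).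
Proof.
move=> /set0Pn[f0 f0_in]; rewrite /MNS; case: pickP => [T //|no_MNS]; exfalso.
pose P (T : {set F}) := (T \subset Fr) && (T != set0).
pose le (T U : {set F}) := ratio_le E s Vr T U && (ratio_le E s Vr U T ==> (#|U| <= #|T|)).
have P_f0 : P [set f0].
  by rewrite /P sub1set f0_in; apply/set0Pn; exists f0; rewrite inE.
have le_refl T : le T T by rewrite /le /ratio_le !leqnn.
have le_total T U : le T U || le U T.
  have := leq_total (#|AsT E s T :&: Vr| * #|U|) (#|AsT E s U :&: Vr| * #|T|).
  by rewrite /le /ratio_le; case: (_ <= _); case: (_ <= _); rewrite //= leq_total.
have le_trans_in : {in P & &, forall U T W, le T U -> le U W -> le T W}.
  move=> U T W /andP[_ U0] /andP[_ T0] /andP[_ W0] /andP[rTU cTU] /andP[rUW cUW].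
  rewrite /le (ratio_le_trans U0 rTU rUW); apply/implyP => rWT.
  apply: leq_trans (implyP cUW (ratio_le_trans T0 rWT rTU)) _.
  exact: implyP cTU (ratio_le_trans W0 rUW rWT).
have [T PT T_min] := finite_total_preorder_min P_f0 le_refl le_total le_trans_in.
have := no_MNS T; rewrite /is_MNS; case/andP: PT => -> -> /= /negbT/negP; apply.
by apply/forallP => U; apply/implyP => PU; apply: T_min PU.
Qed.

Lemma MNS_sub Fr Vr : Fr != set0 -> MNS E s Fr Vr \subset Fr.
Proof. by move/(MNS_spec Vr)/and3P => []. Qed.

Lemma card_MNS_gt0 Fr Vr : Fr != set0 -> 0 < #|MNS E s Fr Vr|.
Proof. by move/(MNS_spec Vr)/and3P => [_ ? _]; rewrite card_gt0. Qed.

Lemma card_MNS_remainder Fr Vr n : Fr != set0 -> #|Fr| <= n.+1 ->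
  #|Fr :\: MNS E s Fr Vr| <= n.
Proof.
move=> Fr0; rewrite cardsD (setIidPr (MNS_sub Vr Fr0)).
by have := card_MNS_gt0 Vr Fr0; lia.
Qed.

(* Compare the MNS with T :|: Fi. *)
Lemma MNS_ratio_le_remainder Fr Vr T : Fr != set0 ->
  let Fi := MNS E s Fr Vr in let Vi := AsT E s Fi :&: Vr in
  T \subset Fr :\: Fi -> #|Vi| * #|T| <= #|AsT E s T :&: (Vr :\: Vi)| * #|Fi|.
Proof.
move=> Fr0 Fi Vi /subsetDP[T_Fr T_Fi].
have /and3P[Fi_Fr Fi0 /forallP/(_ (T :|: Fi))] := MNS_spec Vr Fr0.
have TFi0 : T :|: Fi != set0.
  by case/set0Pn: Fi0 => f f_in; apply/set0Pn; exists f; rewrite inE f_in orbT.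
rewrite subUset T_Fr Fi_Fr TFi0 => /andP[+ _]; rewrite /ratio_le.
rewrite cardsU (disjoint_setI0 T_Fi) cards0 subn0.
have -> : AsT E s (T :|: Fi) :&: Vr = AsT E s T :&: (Vr :\: Vi) :|: Vi.
  apply/setP => u; rewrite /Vi /AsT bigcup_setU !inE.
  by case: (u \in Vr); case: (u \in \bigcup_(f in T) _); case: (u \in \bigcup_(f in Fi) _).
rewrite cardsU (_ : _ :&: Vi = set0) ?cards0 ?subn0; last first.
  by apply/setP => u; rewrite !inE; case: (u \in AsT E s Fi); case: (u \in Vr); rewrite ?andbF.
by rewrite -/Fi -/Vi; nia.
Qed.

Lemma classes_aux_ratio_ge n Fr Vr (a b : nat) :
  (forall T, T \subset Fr -> a * #|T| <= b * #|AsT E s T :&: Vr|) ->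
  forall C, C \in classes_aux E s n Fr Vr -> a * #|C.1| <= b * #|C.2|.
Proof.
elim: n Fr Vr => [//|n IH] Fr Vr ratio_ge C /=.
case: eqP => [//|/eqP Fr0]; rewrite inE => /orP[/eqP -> | C_in].
  exact/ratio_ge/MNS_sub.
apply: IH C_in => T T_sub.
have := MNS_ratio_le_remainder Fr0 T_sub.
have := ratio_ge _ (MNS_sub Vr Fr0); have := card_MNS_gt0 Vr Fr0.
by nia.
Qed.

Lemma classes_aux_cover n Fr Vr f : #|Fr| <= n -> f \in Fr ->
  exists2 C, C \in classes_aux E s n Fr Vr & f \in C.1.
Proof.
elim: n Fr Vr => [|n IH] Fr Vr card_Fr f_in.
  by move: card_Fr; rewrite leqn0 => /eqP/cards0_eq Fr0; rewrite Fr0 inE in f_in.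
have Fr0 : Fr != set0 by apply/set0Pn; exists f.
rewrite /= (negbTE Fr0).
set Fi := MNS E s Fr Vr; set Vi := AsT E s Fi :&: Vr.
case: (boolP (f \in Fi)) => f_Fi; first by exists (Fi, Vi); rewrite ?inE ?eqxx.
have [|C C_in f_C] := IH _ (Vr :\: Vi) (card_MNS_remainder Vr Fr0 card_Fr).
  by rewrite inE f_Fi.
by exists C; rewrite // inE C_in orbT.
Qed.

Lemma class_ceil_le_floorS C : class_ceil C <= (class_floor C).+1.
Proof. by rewrite /class_ceil /class_floor -addn1 leq_add2l leq_b1. Qed.

Lemma mem_AsT T v f : f \in T -> f \in Ns E s v -> v \in AsT E s T.
Proof. by move=> f_T f_v; apply/bigcupP; exists f; last rewrite inE. Qed.

Lemma classes_aux_nbhd n Fr Vr v f : #|Fr| <= n -> v \in Vr -> f \in Fr ->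
  f \in Ns E s v -> exists C C',
  [/\ C \in classes_aux E s n Fr Vr, C' \in classes_aux E s n Fr Vr, v \in C.2,
      f \in C'.1 & class_ceil C <= (class_floor C').+1].
Proof.
elim: n Fr Vr => [|n IH] Fr Vr card_Fr v_in f_in f_v.
  by move: card_Fr; rewrite leqn0 => /eqP/cards0_eq Fr0; rewrite Fr0 inE in f_in.
have Fr0 : Fr != set0 by apply/set0Pn; exists f.
rewrite /= (negbTE Fr0).
set Fi := MNS E s Fr Vr; set Vi := AsT E s Fi :&: Vr.
have card_rem := card_MNS_remainder Vr Fr0 card_Fr.
case: (boolP (f \in Fi)) => f_Fi.
  exists (Fi, Vi), (Fi, Vi); rewrite !inE eqxx /= (mem_AsT f_Fi f_v) v_in.
  by split=> //; apply: class_ceil_le_floorS.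
have f_rem : f \in Fr :\: Fi by rewrite inE f_Fi.
case: (boolP (v \in Vi)) => v_Vi; last first.
  have [|C [C' [C_in C'_in v_C f_C' le_CC']]] := IH _ (Vr :\: Vi) card_rem _ f_rem f_v.
    by rewrite inE v_Vi.
  by exists C, C'; rewrite !inE C_in C'_in !orbT.
have [C' C'_in f_C'] := classes_aux_cover (Vr :\: Vi) card_rem f_rem.
exists (Fi, Vi), C'; split; rewrite ?mem_head ?in_cons ?C'_in ?orbT //.
apply: leq_trans (class_ceil_le_floorS _) _; rewrite ltnS.
apply: leq_divn_cross; first exact: card_MNS_gt0.
  by rewrite card_gt0; apply/set0Pn; exists f.
apply: classes_aux_ratio_ge C'_in => T T_sub.
by rewrite [#|Fi| * _]mulnC; apply: MNS_ratio_le_remainder.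
Qed.

Lemma class_set_nbhd v f : f \in Ns E s v -> exists C C',
  [/\ C \in class_set E s, C' \in class_set E s, v \in C.2,
      f \in C'.1 & class_ceil C <= (class_floor C').+1].
Proof. by apply: classes_aux_nbhd; rewrite ?max_card ?inE. Qed.

End ClassSet.

Local Open Scope ring_scope.

Section RoundedProfile.
Variables (R : realFieldType) (V F : finType) (E : rel V) (s : F -> V).
Implicit Types (sigma : V -> F -> R) (d : F -> R).

Lemma valid_dist_point_mass v d g : valid_dist E s v d -> d g = 1 ->
  g \in Ns E s v /\ forall f, f != g -> d f = 0.
Proof.
move=> [d01 [d_out d_sum]] dg1.
have g_v : g \in Ns E s v.
  by apply: contraT => /d_out; rewrite dg1 => /eqP; rewrite oner_eq0.
have Nv_ne0 : Ns E s v != set0 by apply/set0Pn; exists g.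
have sum0 : \sum_(f | f != g) d f = 0.
  have := d_sum Nv_ne0; rewrite (bigD1 g) //= dg1 => /(congr1 (fun x => x - 1)).
  by rewrite addrC addrK subrr.
have d_ge0 i : 0 <= d i by case/andP: (d01 i).
by split=> // f f_g; apply: (psumr_eq0P (fun i _ => d_ge0 i) sum0).
Qed.

Lemma load_minusE sigma v f : load_minus sigma v f = load sigma f - sigma v f.
Proof. by rewrite /load (bigD1 v) //= addrC addrK. Qed.

Lemma cost_deviate sigma v d :
  cost E s (deviate sigma v d) v = 1 + \sum_(f in Ns E s v) d f * load_minus sigma v f.
Proof.
rewrite /cost /load_minus /deviate eqxx; congr (1 + _); apply: eq_bigr => f _.
by congr (_ * _); apply: eq_bigr => u /negbTE ->.
Qed.

Lemma cost_point_mass sigma v g : valid_dist E s v (sigma v) -> sigma v g = 1 ->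
  cost E s sigma v = load sigma g.
Proof.
move=> sigma_v sigma_g; have [g_v sigma_0] := valid_dist_point_mass sigma_v sigma_g.
rewrite /cost (bigD1 g) //= big1 => [|f /andP[_ f_g]]; last by rewrite sigma_0 ?mul0r.
by rewrite sigma_g mul1r load_minusE sigma_g addr0 addrC subrK.
Qed.

Lemma cost_deviate_ge sigma v d c : valid_dist E s v d -> Ns E s v != set0 ->
  {in Ns E s v, forall f, c <= load_minus sigma v f} ->
  1 + c <= cost E s (deviate sigma v d) v.
Proof.
move=> [d01 [d_out d_sum]] Nv_ne0 c_le; rewrite cost_deviate lerD2l.
have sum_d : \sum_(f in Ns E s v) d f = 1.
  rewrite -(d_sum Nv_ne0) big_mkcond; apply: eq_bigr => f _.
  by case: ifP => // /negbT /d_out ->.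
rewrite -[c]mul1r -sum_d mulr_suml; apply: ler_sum => f f_v.
by apply: ler_wpM2l; [exact: (andP (d01 f)).1 | exact: c_le].
Qed.

Lemma rounded_load_minus_ge sigma v g f :
  client_profile E s sigma -> rounded E s sigma -> sigma v g = 1 ->
  f \in Ns E s v -> load sigma g - 1 <= load_minus sigma v f.
Proof.
move=> sigma_prof sigma_rnd sigma_g f_v.
have [C [C' [C_in C'_in v_C f_C' ceil_le]]] := class_set_nbhd f_v.
have [load_C one_C] := sigma_rnd C C_in.
have [g' [[g'_C sigma_g'] _]] := one_C v v_C.
have [_ sigma_0] := valid_dist_point_mass (sigma_prof v) sigma_g.
have g'g : g' = g.
  by apply/eqP; apply: contraT => /sigma_0; rewrite sigma_g' => /eqP; rewrite oner_eq0.
subst g'.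
have load_g : load sigma g <= (class_ceil C)%:R.
  by case: (load_C g g'_C) => ->; rewrite ler_nat // leq_addr.
have load_f : (class_floor C')%:R <= load sigma f.
  by case: ((sigma_rnd C' C'_in).1 f f_C') => ->; rewrite ler_nat // leq_addr.
have : (class_ceil C)%:R <= (class_floor C')%:R + 1 :> R by rewrite natr1 ler_nat.
rewrite load_minusE; case: (eqVneq f g) => [-> | f_g]; first by rewrite sigma_g.
by rewrite sigma_0 // subr0; lra.
Qed.

End RoundedProfile.

Theorem mainTheorem9 (R : realFieldType) (V F : finType) (E : rel V)
  (s : F -> V) (sigma : V -> F -> R) :
  client_profile E s sigma ->
  rounded E s sigma ->
  client_equilibrium E s sigma.
Proof.
move=> sigma_prof sigma_rnd v d d_v; apply/negP; rewrite -leNgt.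
have [Nv_eq0 | Nv_ne0] := eqVneq (Ns E s v) set0.
  by rewrite /cost Nv_eq0 !big_set0.
have [f f_v] := set0Pn _ Nv_ne0.
have [C [_ [C_in _ v_C _ _]]] := class_set_nbhd f_v.
have [g [[_ sigma_g] _]] := (sigma_rnd C C_in).2 v v_C.
rewrite (cost_point_mass (sigma_prof v) sigma_g) -[load sigma g](addrNK 1) addrC.
apply: cost_deviate_ge d_v Nv_ne0 _ => f' f'_v.
exact: rounded_load_minus_ge sigma_g f'_v.
Qed.
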